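(* Let $H$ be an $\aleph_1$-free group and $\phi:\mathcal{H}\to H$ a homomorphism. Then for every finitely generated subgroup $F\le H$ there exists $n\in\omega$ such that $\phi(\mathcal{H}^n)\cap F=\{1_H\}$.
   Context: A group is $\aleph_1$-free if every countable subgroup is free. The Hawaiian earring group $\mathcal{H}$: fix letters $\{a_n^{\pm1}\}_{n\in\omega}$. A word is a function $W:\overline{W}\to\{a_n^{\pm1}\}_{n\in\omega}$ whose domain $\overline{W}$ is a totally ordered set such that for each $m$ the preimage $W^{-1}(\{a_n^{\pm1}\}_{n=0}^m)$ is finite; words are identified up to order isomorphism of domains preserving letters. For $m\in\omega$, $p_m(W)$ is the restriction of $W$ to $\{i: W(i)\in\{a_n^{\pm1}\}_{n=0}^m\}$, a finite word. Two words $W,U$ are equivalent if for every $m$, $p_m(W)$ and $p_m(U)$ are equal in the free group $F(a_0,\dots,a_m)$. $\mathcal{H}$ is the set of equivalence classes with multiplication induced by concatenation (ordered disjoint union of domains, first word below second) and inverse induced by reversing the order and inverting letters. $\mathcal{H}^m$ denotes the subgroup of elements having a representative word using no letter from $\{a_n^{\pm1}\}_{n=0}^m$. *)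

From Stdlib Require Import List Arith Bool Sorted.
Import ListNotations.

Record group := Group {
  gcar :> Type;
  gmul : gcar -> gcar -> gcar;
  ginv : gcar -> gcar;
  gone : gcar;
  gmulA : forall x y z, gmul x (gmul y z) = gmul (gmul x y) z;
  gmul1l : forall x, gmul gone x = x;
  gmul1r : forall x, gmul x gone = x;
  gmulVl : forall x, gmul (ginv x) x = gone;
  gmulVr : forall x, gmul x (ginv x) = gone
}.
Arguments gmul {g}. Arguments ginv {g}. Arguments gone {g}.

Definition is_subgroup (G : group) (S : G -> Prop) : Prop :=
  S gone /\ (forall x y, S x -> S y -> S (gmul x y)) /\ (forall x, S x -> S (ginv x)).

Definition countable_pred (G : group) (S : G -> Prop) : Prop :=
  exists f : nat -> G, forall x, S x -> exists k, f k = x.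

Inductive gen (G : group) (A : G -> Prop) : G -> Prop :=
| gen_base : forall x, A x -> gen G A x
| gen_one : gen G A (@gone G)
| gen_mul : forall x y, gen G A x -> gen G A y -> gen G A (gmul x y)
| gen_inv : forall x, gen G A x -> gen G A (ginv x).

(** Words in elements of G and their inverses: (x,false) = x, (x,true) = x^-1. *)
Definition geval (G : group) (l : list (G * bool)) : G :=
  fold_right (fun (p : G * bool) (acc : G) => @gmul G (if snd p then ginv (fst p) else fst p) acc) (@gone G) l.

Fixpoint greduced (G : group) (l : list (G * bool)) : Prop :=
  match l with
  | p :: ((q :: _) as t) => ~ (fst p = fst q /\ snd p <> snd q) /\ greduced G t
  | _ => True
  end.

Definition free_subgroup (G : group) (S : G -> Prop) : Prop :=
  exists X : G -> Prop,
    (forall x, S x <-> gen G X x) /\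
    (forall l : list (G * bool), l <> [] -> Forall (fun p => X (fst p)) l ->
       greduced G l -> geval G l <> gone).

Definition aleph1_free (G : group) : Prop :=
  forall S : G -> Prop, is_subgroup G S -> countable_pred G S -> free_subgroup G S.

(** Letter (n, b) is a_n if b = false, a_n^{-1} if b = true. *)
Definition letter := (nat * bool)%type.

Record word := Word {
  wdom : Type;
  wlt : wdom -> wdom -> Prop;
  wlt_irrefl : forall i, ~ wlt i i;
  wlt_trans : forall i j k, wlt i j -> wlt j k -> wlt i k;
  wlt_total : forall i j, wlt i j \/ i = j \/ wlt j i;
  wlet : wdom -> letter;
  wfin : forall m, exists l : list wdom, forall i, fst (wlet i) <= m -> In i l
}.

(** l is p_m(W): the letters of W with index <= m, in order. *)
Definition wproj (m : nat) (W : word) (l : list letter) : Prop :=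
  exists ds : list (wdom W),
    StronglySorted (wlt W) ds /\
    (forall i, In i ds <-> fst (wlet W i) <= m) /\
    l = map (wlet W) ds.

Definition lcancel (a b : letter) : bool :=
  Nat.eqb (fst a) (fst b) && negb (Bool.eqb (snd a) (snd b)).

Fixpoint freduce (l : list letter) : list letter :=
  match l with
  | [] => []
  | a :: t => match freduce t with
              | b :: r => if lcancel a b then r else a :: b :: r
              | [] => [a]
              end
  end.

(** Equivalence: all projections are equal in the free group F(a_0..a_m). *)
Definition wequiv (W U : word) : Prop :=
  forall m l1 l2, wproj m W l1 -> wproj m U l2 -> freduce l1 = freduce l2.

Definition cat_lt (W U : word) (x y : wdom W + wdom U) : Prop :=
  match x, y with
  | inl a, inl b => wlt W a b
  | inl _, inr _ => True
  | inr _, inl _ => False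
  | inr a, inr b => wlt U a b
  end.

Definition cat_let (W U : word) (x : wdom W + wdom U) : letter :=
  match x with inl a => wlet W a | inr b => wlet U b end.

Lemma cat_irrefl W U : forall i, ~ cat_lt W U i i.
Proof. intros [a|b]; simpl; apply wlt_irrefl. Qed.

Lemma cat_trans W U : forall i j k, cat_lt W U i j -> cat_lt W U j k -> cat_lt W U i k.
Proof.
  intros [a|a] [b|b] [c|c]; simpl; try tauto; eauto using wlt_trans.
Qed.

Lemma cat_total W U : forall i j, cat_lt W U i j \/ i = j \/ cat_lt W U j i.
Proof.
  intros [a|a] [b|b]; simpl; auto.
  - destruct (wlt_total W a b) as [H|[H|H]]; subst; auto.
  - destruct (wlt_total U a b) as [H|[H|H]]; subst; auto.
Qed.

Lemma cat_fin W U : forall m, exists l : list (wdom W + wdom U),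
  forall i, fst (cat_let W U i) <= m -> In i l.
Proof.
  intros m. destruct (wfin W m) as [l1 H1]. destruct (wfin U m) as [l2 H2].
  exists (map inl l1 ++ map inr l2). intros [a|b] H; simpl in H;
  apply in_or_app; [left|right]; apply in_map; auto.
Qed.

Definition wcat (W U : word) : word :=
  Word (wdom W + wdom U) (cat_lt W U) (cat_irrefl W U) (cat_trans W U)
       (cat_total W U) (cat_let W U) (cat_fin W U).

(** A homomorphism H -> G, presented on representative words. *)
Definition hom_from_HE (G : group) (phi : word -> G) : Prop :=
  (forall W U, wequiv W U -> phi W = phi U) /\
  (forall W U, phi (wcat W U) = gmul (phi W) (phi U)).

(** x lies in phi(H^n): it is the image of a word using only letters a_k, k > n. *)
Definition in_image_HE_tail (G : group) (phi : word -> G) (n : nat) (x : G) : Prop :=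
  exists W : word, (forall i, n < fst (wlet W i)) /\ phi W = x.

From Stdlib Require Import List Arith Lia Sorted Classical ClassicalEpsilon ProofIrrelevance Eqdep_dec Cantor.
Import ListNotations.

(** Suppose no [n] works for [F = <gs>].  Then for every [n] there is a word [W_n] in the
    letters [a_k], [k > n], such that [phi W_n] is a nontrivial product of [L_n] generators
    from [gs].  Infinite concatenation yields words [U_n = W_n U_(n+1)^(K_n + 1)], so that
    [g_n = phi U_n] satisfies [g_n = phi(W_n) g_(n+1)^(K_n + 1)].  The subgroup generated by
    [gs] and all [g_n] is countable, hence free.  In a free basis the reduced length obeys
    [|x^(k+1)| >= |x| + k] for [x <> 1], and [|phi W_n| <= C L_n]; choosing
    [K_n = n L_n + 1] forces [|g_(n+1)| < |g_n|] for all [n >= C], an infinite descent. *)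

Section GroupFacts.
Context {G : group}.

Lemma gmul_cancel_l (a x y : G) : gmul a x = gmul a y -> x = y.
Proof.
  intro E. rewrite <- (gmul1l G x), <- (gmul1l G y), <- (gmulVl G a), <- !gmulA, E.
  reflexivity.
Qed.

Lemma ginv_unique (x y : G) : gmul x y = gone -> y = ginv x.
Proof. intro E. apply (gmul_cancel_l x). rewrite E, gmulVr. reflexivity. Qed.

Lemma ginvK (x : G) : ginv (ginv x) = x.
Proof. symmetry. apply ginv_unique, gmulVl. Qed.

Lemma ginvM (x y : G) : ginv (gmul x y) = gmul (ginv y) (ginv x).
Proof.
  symmetry. apply ginv_unique.
  rewrite <- gmulA, (gmulA _ y), gmulVr, gmul1l, gmulVr. reflexivity.
Qed.

Lemma ginv1 : ginv (@gone G) = gone.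
Proof. symmetry. apply ginv_unique, gmul1l. Qed.

Fixpoint gpow (x : G) (k : nat) : G :=
  match k with 0 => gone | S k => gmul x (gpow x k) end.

Lemma gpow1 k : gpow gone k = gone.
Proof. induction k as [|k IH]; simpl; [reflexivity|]. rewrite IH. apply gmul1l. Qed.

Lemma gpow_conj (u c : G) k :
  gpow (gmul u (gmul c (ginv u))) k = gmul u (gmul (gpow c k) (ginv u)).
Proof.
  induction k as [|k IH]; simpl.
  - rewrite gmul1l, gmulVr. reflexivity.
  - rewrite IH, <- !gmulA, (gmulA _ (ginv u) u), gmulVl, gmul1l. reflexivity.
Qed.

Lemma gen_gen (A : G -> Prop) x : gen G (gen G A) x -> gen G A x.
Proof. induction 1; auto using gen, gen_one, gen_mul, gen_inv. Qed.

Lemma gen_subgroup (A : G -> Prop) : is_subgroup G (gen G A).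
Proof. split; [apply gen_one | split; intros; [apply gen_mul | apply gen_inv]; auto]. Qed.

(** * Words over a group *)

Definition lval (p : G * bool) : G := if snd p then ginv (fst p) else fst p.
Definition linv (p : G * bool) : G * bool := (fst p, negb (snd p)).
Definition inv_word (l : list (G * bool)) : list (G * bool) := rev (map linv l).
Definition nocancel (p q : G * bool) : Prop := ~ (fst p = fst q /\ snd p <> snd q).

Lemma geval_cons p l : geval G (p :: l) = gmul (lval p) (geval G l).
Proof. reflexivity. Qed.

Lemma geval_app l1 l2 : geval G (l1 ++ l2) = gmul (geval G l1) (geval G l2).
Proof.
  induction l1 as [|p l1 IH]; simpl; [symmetry; apply gmul1l|].
  rewrite IH, gmulA. reflexivity.
Qed.

Lemma lval_linv p : lval (linv p) = ginv (lval p).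
Proof. destruct p as [x []]; unfold lval, linv; simpl; [symmetry; apply ginvK | reflexivity]. Qed.

Lemma inv_word_cons p l : inv_word (p :: l) = inv_word l ++ [linv p].
Proof. reflexivity. Qed.

Lemma geval_inv l : geval G (inv_word l) = ginv (geval G l).
Proof.
  induction l as [|p l IH]; [symmetry; apply ginv1|].
  rewrite inv_word_cons, geval_app, IH, (geval_cons p l), ginvM. simpl.
  rewrite gmul1r. f_equal. apply (lval_linv p).
Qed.

Lemma length_inv_word l : length (inv_word l) = length l.
Proof. unfold inv_word. rewrite length_rev, length_map. reflexivity. Qed.

Lemma Forall_inv_word (P : G -> Prop) l :
  Forall (fun p => P (fst p)) l -> Forall (fun p => P (fst p)) (inv_word l).
Proof.
  intro H. apply Forall_rev, Forall_map. eapply Forall_impl; [|exact H]. auto.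
Qed.

Lemma geval_cancel p q l : ~ nocancel p q -> geval G (p :: q :: l) = geval G l.
Proof.
  intro H. apply NNPP in H. destruct p as [x b], q as [y c], H as [Exy Ebc]; simpl in *.
  subst y. rewrite gmulA.
  replace (gmul (if b then ginv x else x) (if c then ginv x else x)) with (@gone G).
  - apply gmul1l.
  - destruct b, c; try congruence; symmetry; [apply gmulVl | apply gmulVr].
Qed.

Lemma geval_gen (P : G -> Prop) l : Forall (fun p => P (fst p)) l -> gen G P (geval G l).
Proof.
  induction 1 as [|[x []] l Hx _ IH]; simpl in *.
  - apply gen_one.
  - apply gen_mul; [apply gen_inv, gen_base|]; auto.
  - apply gen_mul; [apply gen_base|]; auto.
Qed.

Lemma gen_geval (A : G -> Prop) x :
  gen G A x -> exists l, Forall (fun p => A (fst p)) l /\ geval G l = x.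
Proof.
  induction 1 as [x Hx| |x y _ [l1 [H1 E1]] _ [l2 [H2 E2]]|x _ [l [H E]]].
  - exists [(x, false)]. split; [constructor; auto | apply gmul1r].
  - exists []. auto.
  - exists (l1 ++ l2). split; [apply Forall_app; auto|]. rewrite geval_app. congruence.
  - exists (inv_word l). split; [apply Forall_inv_word; auto|]. rewrite geval_inv. congruence.
Qed.

Lemma reduced_tail p l : greduced G (p :: l) -> greduced G l.
Proof. destruct l; simpl; tauto. Qed.

Lemma reduced_app l1 l2 : greduced G l1 -> greduced G l2 ->
  (forall a p q b, l1 = a ++ [p] -> l2 = q :: b -> nocancel p q) -> greduced G (l1 ++ l2).
Proof.
  induction l1 as [|x [|y t] IH]; intros H1 H2 J; simpl; auto.
  - destruct l2 as [|q b]; simpl; auto. split; auto. apply (J [] x q b); auto.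
  - destruct H1 as [Hxy Ht]. split; auto. apply IH; auto.
    intros a p q b E1 E2. apply (J (x :: a) p q b); [rewrite E1|]; auto.
Qed.

Lemma reduced_app_l l1 l2 : greduced G (l1 ++ l2) -> greduced G l1.
Proof.
  induction l1 as [|x [|y t] IH]; simpl; auto. intros [H1 H2]. split; [exact H1 | apply IH, H2].
Qed.

Lemma reduced_app_r l1 l2 : greduced G (l1 ++ l2) -> greduced G l2.
Proof. induction l1 as [|x t IH]; simpl; auto. intro H. apply IH, (reduced_tail x), H. Qed.

Lemma reduced_nocancel a p q b : greduced G (a ++ p :: q :: b) -> nocancel p q.
Proof. intro H. apply reduced_app_r in H. simpl in H. tauto. Qed.

Lemma nocancel_sym p q : nocancel p q -> nocancel q p.
Proof. intros H [E1 E2]. apply H. auto. Qed.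

Lemma nocancel_linv p q : nocancel p q -> nocancel (linv q) (linv p).
Proof.
  destruct p as [x b], q as [y c]; unfold nocancel, linv; simpl.
  intros H [E1 E2]. apply H. split; auto. destruct b, c; simpl in *; congruence.
Qed.

Lemma reduced_inv_word l : greduced G l -> greduced G (inv_word l).
Proof.
  induction l as [|p t IH]; intros H; simpl; auto.
  rewrite inv_word_cons. apply reduced_app; [apply IH, (reduced_tail p), H | simpl; auto|].
  intros a x q b E1 E2. injection E2 as <- <-. destruct t as [|y t'].
  - destruct a as [|? [|]]; discriminate.
  - rewrite inv_word_cons in E1. apply app_inj_tail in E1. destruct E1 as [_ <-].
    apply nocancel_linv. simpl in H. tauto.
Qed.

Definition cyc_reduced (c : list (G * bool)) : Prop :=
  forall a p q b, c = a ++ [p] -> c = q :: b -> nocancel p q.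

Lemma reduced_cyclic_decomposition r : r <> [] -> greduced G r ->
  exists u c, r = u ++ c ++ inv_word u /\ c <> [] /\ cyc_reduced c.
Proof.
  remember (length r) as N eqn:HN. revert r HN.
  induction N as [N IH] using lt_wf_ind; intros r HN Hn Hr.
  destruct (classic (cyc_reduced r)) as [Hc|Hc].
  { exists [], r. rewrite app_nil_r. auto. }
  unfold cyc_reduced in Hc.
  apply not_all_ex_not in Hc as [a Hc]. apply not_all_ex_not in Hc as [p Hc].
  apply not_all_ex_not in Hc as [q Hc]. apply not_all_ex_not in Hc as [b Hc].
  apply imply_to_and in Hc as [E1 Hc]. apply imply_to_and in Hc as [E2 Hc].
  subst r. destruct a as [|q' [|z m]]; simpl in E2; injection E2 as -> Eb.
  - exfalso. apply Hc. intros [_ H]. auto.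
  - exfalso. apply Hc, nocancel_sym. simpl in Hr. tauto.
  - assert (Hp : p = linv q).
    { apply NNPP in Hc. destruct p as [x1 b1], q as [x2 b2], Hc as [H1 H2]; unfold linv.
      simpl in *. subst. destruct b1, b2; simpl in *; congruence. }
    assert (Hm : greduced G (z :: m)).
    { apply reduced_tail in Hr. eapply reduced_app_l; eauto. }
    destruct (IH (length (z :: m))) with (r := z :: m) as [u [c [Em [Hcn Hcc]]]];
      auto; try discriminate.
    { subst N. simpl. rewrite length_app. simpl. lia. }
    exists (q :: u), c. split; auto.
    rewrite Hp, inv_word_cons, Em. simpl. rewrite !app_assoc. reflexivity.
Qed.

Fixpoint wpow (c : list (G * bool)) (k : nat) : list (G * bool) :=
  match k with 0 => [] | S k => c ++ wpow c k end.

Lemma geval_wpow c k : geval G (wpow c k) = gpow (geval G c) k.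
Proof. induction k as [|k IH]; simpl; auto. rewrite geval_app, IH. reflexivity. Qed.

Lemma length_wpow c k : length (wpow c k) = k * length c.
Proof. induction k as [|k IH]; simpl; auto. rewrite length_app, IH. reflexivity. Qed.

Lemma Forall_wpow (P : G * bool -> Prop) c k : Forall P c -> Forall P (wpow c k).
Proof. intro H. induction k; simpl; [constructor | apply Forall_app; auto]. Qed.

Lemma wpow_last c k a p : c = a ++ [p] -> exists a', wpow c (S k) = a' ++ [p].
Proof.
  intro E. induction k as [|k [a' Ha']].
  - exists a. simpl. rewrite app_nil_r. exact E.
  - exists (c ++ a'). simpl in *. rewrite Ha', app_assoc. reflexivity.
Qed.

Lemma reduced_wpow c k : greduced G c -> cyc_reduced c -> greduced G (wpow c k).
Proof.
  intros Hr Hc. induction k as [|k IH]; simpl; auto.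
  apply reduced_app; auto. intros a p q b E1 E2.
  destruct k as [|k]; [discriminate|]. destruct c as [|x c'].
  - apply (f_equal (@length _)) in E2. rewrite length_wpow in E2. simpl in E2. lia.
  - simpl in E2. injection E2 as -> _. apply (Hc a p q c'); auto.
Qed.

End GroupFacts.

(** * Reduced length in a free basis *)

Section FreeLength.
Context {G : group}.
Variable X : G -> Prop.

Definition freely_independent : Prop :=
  forall l : list (G * bool), l <> [] -> Forall (fun p => X (fst p)) l ->
    greduced G l -> geval G l <> gone.

Hypothesis X_free : freely_independent.

Definition Xword (l : list (G * bool)) : Prop := Forall (fun p => X (fst p)) l.

Lemma Xword_app l1 l2 : Xword l1 -> Xword l2 -> Xword (l1 ++ l2).
Proof. intros; apply Forall_app; auto. Qed.

Lemma reduced_geval_inj r1 r2 : Xword r1 -> Xword r2 -> greduced G r1 -> greduced G r2 ->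
  geval G r1 = geval G r2 -> r1 = r2.
Proof.
  revert r2. induction r1 as [|p t1 IH]; intros [|q t2] X1 X2 R1 R2 E; auto.
  - exfalso. apply (X_free (q :: t2)); auto. discriminate.
  - exfalso. apply (X_free (p :: t1)); auto. discriminate.
  - destruct (classic (p = q)) as [<-|Hpq].
    + inversion X1; inversion X2; subst. f_equal.
      apply IH; eauto using reduced_tail.
      rewrite !geval_cons in E. eapply gmul_cancel_l; eauto.
    + exfalso. apply (X_free (inv_word (q :: t2) ++ p :: t1)).
      * destruct (inv_word (q :: t2)); discriminate.
      * apply Xword_app; [apply Forall_inv_word|]; auto.
      * apply reduced_app; [apply reduced_inv_word; auto | auto|].
        intros a x y b E1 E2. rewrite inv_word_cons in E1. apply app_inj_tail in E1.
        destruct E1 as [_ <-]. injection E2 as <- <-.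
        destruct p as [x1 b1], q as [x2 b2]; unfold nocancel, linv; simpl.
        intros [H1 H2]. apply Hpq. destruct b1, b2; simpl in *; congruence.
      * rewrite geval_app, geval_inv, E. apply gmulVl.
Qed.

Lemma exists_reduced l : Xword l ->
  exists r, Xword r /\ greduced G r /\ geval G r = geval G l /\ length r <= length l.
Proof.
  induction l as [|p t IH]; intro H.
  - exists []. simpl; repeat split; auto.
  - inversion H as [|? ? Hp Ht]; subst.
    destruct (IH Ht) as [[|q r'] [Xr [Rr [Er Lr]]]].
    + exists [p]. repeat split; [constructor; auto | | simpl; lia].
      rewrite (geval_cons p t), (geval_cons p []), Er. reflexivity.
    + destruct (classic (nocancel p q)) as [C|C].
      * exists (p :: q :: r'). split; [constructor; auto|]. split; [simpl; auto|].
        split; [rewrite (geval_cons p t), <- Er; reflexivity | simpl in *; lia].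
      * inversion Xr; subst. exists r'. repeat split; eauto using reduced_tail.
        -- rewrite (geval_cons p t), <- Er, <- (geval_cancel p q r' C). reflexivity.
        -- simpl in *; lia.
Qed.

Definition has_length (x : G) (n : nat) : Prop :=
  exists r, Xword r /\ greduced G r /\ geval G r = x /\ length r = n.

(** Reduced length with respect to [X]; a junk value outside [gen G X]. *)
Definition ell (x : G) : nat := epsilon (inhabits 0) (has_length x).

Lemma ell_spec x : gen G X x -> has_length x (ell x).
Proof.
  intro Hx. unfold ell. apply epsilon_spec. destruct (gen_geval _ _ Hx) as [l [Hl E]].
  destruct (exists_reduced l Hl) as [r [A [B [C _]]]].
  exists (length r), r. repeat split; congruence.
Qed.

Lemma ell_eq x n : has_length x n -> ell x = n.
Proof.
  intro H. destruct (epsilon_spec (inhabits 0) (has_length x) (ex_intro _ n H))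
    as [r1 [A1 [B1 [C1 D1]]]].
  destruct H as [r2 [A2 [B2 [C2 D2]]]].
  fold (ell x) in D1. rewrite <- D1, <- D2. f_equal. apply reduced_geval_inj; congruence.
Qed.

Lemma ell1 : ell gone = 0.
Proof. apply ell_eq. exists []. repeat split; constructor. Qed.

Lemma ell_mul x y : gen G X x -> gen G X y -> ell (gmul x y) <= ell x + ell y.
Proof.
  intros Hx Hy. destruct (ell_spec x Hx) as [r1 [A1 [_ [C1 D1]]]].
  destruct (ell_spec y Hy) as [r2 [A2 [_ [C2 D2]]]].
  destruct (exists_reduced (r1 ++ r2)) as [r [A [B [C D]]]]; [apply Xword_app; auto|].
  rewrite (ell_eq _ (length r)); [rewrite length_app in D; lia|].
  exists r. repeat split; auto. rewrite C, geval_app. congruence.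
Qed.

Lemma ell_inv x : gen G X x -> ell (ginv x) = ell x.
Proof.
  intro Hx. destruct (ell_spec x Hx) as [r [A [B [C D]]]]. apply ell_eq.
  exists (inv_word r). repeat split.
  - apply Forall_inv_word; auto.
  - apply reduced_inv_word; auto.
  - rewrite geval_inv. congruence.
  - rewrite length_inv_word. auto.
Qed.

Lemma ell_geval_le (c : nat) l : Forall (fun p => gen G X (fst p) /\ ell (fst p) <= c) l ->
  ell (geval G l) <= c * length l.
Proof.
  induction 1 as [|[x b] l [Hx Hc] Hl IH]; [simpl; rewrite ell1; lia|]. cbn [fst] in Hx, Hc.
  assert (Hl' : gen G X (geval G l)).
  { apply gen_gen, geval_gen. eapply Forall_impl; [|exact Hl]. intros q [Hq _]. exact Hq. }
  assert (Hb : gen G X (lval (x, b)) /\ ell (lval (x, b)) <= c).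
  { unfold lval. destruct b; simpl; [rewrite ell_inv by exact Hx|]; split; auto using gen_inv. }
  destruct Hb as [Hb1 Hb2]. pose proof (ell_mul _ _ Hb1 Hl').
  rewrite geval_cons. cbn [length]. lia.
Qed.

Lemma ell_gpowS x k : gen G X x -> x <> gone -> ell x + k <= ell (gpow x (S k)).
Proof.
  intros Hx Hne. destruct (ell_spec x Hx) as [r [A [B [C D]]]].
  assert (Hrn : r <> []) by (intro E; subst; apply Hne; reflexivity).
  destruct (reduced_cyclic_decomposition r Hrn B) as [u [c [Er [Hcn Hcc]]]].
  subst r. apply Forall_app in A as [Xu A]. apply Forall_app in A as [Xc _].
  assert (Ru : greduced G u) by (eapply reduced_app_l; eauto).
  assert (Rc : greduced G c) by (eapply reduced_app_l, reduced_app_r; eauto).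
  rewrite (ell_eq (gpow x (S k)) (length (u ++ wpow c (S k) ++ inv_word u))).
  { rewrite <- D, !length_app, length_wpow, length_inv_word.
    destruct c; [congruence|]. simpl. nia. }
  exists (u ++ wpow c (S k) ++ inv_word u). repeat split.
  - apply Xword_app; [exact Xu | apply Xword_app; [apply Forall_wpow, Xc | apply Forall_inv_word, Xu]].
  - apply reduced_app; [auto| apply reduced_app |].
    + apply reduced_wpow; auto.
    + apply reduced_inv_word; auto.
    + intros a p q b E1 E2. destruct (exists_last Hcn) as [c' [z Ez]].
      destruct (wpow_last c k c' z Ez) as [a' Ha']. rewrite Ha' in E1.
      apply app_inj_tail in E1 as [_ <-]. rewrite Ez, E2 in B.
      apply (reduced_nocancel (u ++ c') z q b). rewrite <- app_assoc in B |- *. exact B.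
    + intros a p q b E1 E2. destruct c as [|c0 cs]; [congruence|].
      injection E2 as <- _. rewrite E1 in B.
      apply (reduced_nocancel a p c0 (cs ++ inv_word (a ++ [p]))).
      rewrite <- app_assoc in B. exact B.
  - rewrite !geval_app, geval_wpow, geval_inv, <- gpow_conj, <- C, !geval_app, geval_inv.
    reflexivity.
Qed.

Lemma no_power_descent (f g : nat -> G) (k : nat -> nat) (N : nat) :
  (forall n, gen G X (f n)) -> (forall n, gen G X (g n)) -> (forall n, f n <> gone) ->
  (forall n, g n = gmul (f n) (gpow (g (S n)) (S (k n)))) ->
  (forall n, N <= n -> ell (f n) < k n) -> False.
Proof.
  intros Xf Xg Hf Hg Hk.
  assert (step : forall n, N <= n -> g (S n) <> gone -> ell (g (S n)) < ell (g n)).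
  { intros n Hn Hne.
    assert (E : gpow (g (S n)) (S (k n)) = gmul (ginv (f n)) (g n)).
    { rewrite (Hg n), gmulA, gmulVl, gmul1l. reflexivity. }
    pose proof (ell_gpowS _ (k n) (Xg (S n)) Hne) as P.
    rewrite E in P. pose proof (ell_mul _ _ (gen_inv _ _ _ (Xf n)) (Xg n)) as Q.
    rewrite (ell_inv _ (Xf n)) in Q. specialize (Hk n Hn). lia. }
  assert (nontrivial : forall n, N <= n -> g (S n) <> gone).
  { intros n Hn E.
    assert (E' : g (S (S n)) <> gone).
    { intro E'. apply (Hf (S n)). rewrite <- E, (Hg (S n)), E', gpow1, gmul1r.
      reflexivity. }
    pose proof (step (S n) (le_S _ _ Hn) E') as P. rewrite E, ell1 in P. lia. }
  assert (descent : forall j, ell (g (N + j)) + j <= ell (g N)).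
  { induction j as [|j IH]; [rewrite !Nat.add_0_r; lia|].
    rewrite (Nat.add_succ_r N j). pose proof (step (N + j) ltac:(lia) (nontrivial (N + j) ltac:(lia))).
    lia. }
  pose proof (descent (S (ell (g N)))). lia.
Qed.
End FreeLength.

Fixpoint code (l : list (nat * bool)) : nat :=
  match l with
  | [] => 0
  | (i, b) :: t => S (to_nat (to_nat (i, Nat.b2n b), code t))
  end.

Lemma code_inj l1 l2 : code l1 = code l2 -> l1 = l2.
Proof.
  revert l2. induction l1 as [|[i b] t IH]; intros [|[j c] t2]; try discriminate; auto.
  intro E. cbn [code] in E. apply Nat.succ_inj, to_nat_inj, pair_equal_spec in E as [E1 E2].
  apply to_nat_inj, pair_equal_spec in E1 as [-> E1].
  rewrite (IH t2 E2). destruct b, c; easy.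
Qed.

Lemma countable_gen (G : group) (A : G -> Prop) (a : nat -> G) :
  (forall y, A y -> exists i, a i = y) -> countable_pred G (gen G A).
Proof.
  intro Ha.
  pose (ev := fun l : list (nat * bool) => geval G (map (fun p => (a (fst p), snd p)) l)).
  exists (fun n => epsilon (inhabits gone) (fun x => exists l, code l = n /\ x = ev l)).
  intros x Hx. destruct (gen_geval A x Hx) as [l [Hl <-]]. clear Hx.
  assert (Hli : exists li, map (fun p => (a (fst p), snd p)) li = l).
  { induction Hl as [|[y b] t Hy _ [li Hli]]; [exists []; reflexivity|].
    destruct (Ha y Hy) as [i Hi]. exists ((i, b) :: li). simpl in *. congruence. }
  destruct Hli as [li <-]. exists (code li).
  destruct (epsilon_spec (inhabits gone) (fun x => exists l, code l = code li /\ x = ev l))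
    as [l' [E1 ->]]; [eauto|].
  apply code_inj in E1. subst. reflexivity.
Qed.

Lemma countable_gen_list_range (G : group) (gs : list G) (g : nat -> G) :
  countable_pred G (gen G (fun y => In y gs \/ exists n, y = g n)).
Proof.
  apply (countable_gen G _ (fun i => nth i gs (g (i - length gs)))).
  intros y [Hy|[n ->]].
  - destruct (In_nth _ _ gone Hy) as [i [Hi Ei]]. exists i.
    rewrite <- Ei. apply nth_indep. exact Hi.
  - exists (length gs + n). rewrite nth_overflow by lia. f_equal. lia.
Qed.

(** * Hawaiian earring words *)

Lemma StronglySorted_eq {A} (lt : A -> A -> Prop) (irr : forall x, ~ lt x x)
  (tr : forall x y z, lt x y -> lt y z -> lt x z) l1 l2 :
  StronglySorted lt l1 -> StronglySorted lt l2 -> (forall x, In x l1 <-> In x l2) -> l1 = l2.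
Proof.
  revert l2. induction l1 as [|a t IH]; intros [|b t2] S1 S2 E; auto.
  - exfalso. apply (proj2 (E b)). left; auto.
  - exfalso. apply (proj1 (E a)). left; auto.
  - apply StronglySorted_inv in S1 as [S1 Ha], S2 as [S2 Hb].
    rewrite Forall_forall in Ha, Hb.
    assert (Eab : a = b).
    { destruct (classic (a = b)) as [|Hab]; auto. exfalso.
      destruct (proj1 (E a) (or_introl eq_refl)) as [|Ha']; [congruence|].
      destruct (proj2 (E b) (or_introl eq_refl)) as [|Hb']; [congruence|].
      apply (irr a). eauto. }
    subst b. f_equal. apply IH; auto. intro x. split; intro Hx.
    + destruct (proj1 (E x) (or_intror Hx)) as [<-|]; auto. exfalso. apply (irr a), Ha, Hx.
    + destruct (proj2 (E x) (or_intror Hx)) as [<-|]; auto. exfalso. apply (irr a), Hb, Hx.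
Qed.

Lemma wequiv_of_monotone_surj (A B : word) (f : wdom A -> wdom B) :
  (forall i j, wlt A i j -> wlt B (f i) (f j)) -> (forall i, wlet B (f i) = wlet A i) ->
  (forall y, exists x, f x = y) -> wequiv A B.
Proof.
  intros Hmono Hlet Hsurj m l1 l2 [ds1 [S1 [I1 ->]]] [ds2 [S2 [I2 ->]]].
  replace ds2 with (map f ds1).
  { rewrite map_map. f_equal. apply map_ext. auto. }
  apply (StronglySorted_eq (wlt B) (wlt_irrefl B) (wlt_trans B)); [|exact S2|].
  - clear -S1 Hmono. induction S1 as [|x l _ IH Hx]; simpl; constructor; auto.
    apply Forall_map. eapply Forall_impl; [|exact Hx]. auto.
  - intro y. rewrite I2, in_map_iff. split.
    + intros [x [<- Hx]]. rewrite Hlet. apply I1, Hx.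
    + intro H. destruct (Hsurj y) as [x <-]. exists x. rewrite Hlet in H. split; [|apply I1]; auto.
Qed.

Fixpoint wrep (V : word) (k : nat) : word :=
  match k with 0 => V | S k => wcat V (wrep V k) end.

Lemma hom_wrep (G : group) (phi : word -> G) V k : hom_from_HE G phi ->
  phi (wrep V k) = gpow (phi V) (S k).
Proof.
  intros [_ Hmul]. induction k as [|k IH]; simpl; [symmetry; apply gmul1r|].
  rewrite Hmul, IH. reflexivity.
Qed.

Fixpoint wrep_index (V : word) (k : nat) : wdom (wrep V k) -> nat * wdom V :=
  match k return wdom (wrep V k) -> nat * wdom V with
  | 0 => fun x => (0, x)
  | S k => fun z => match z with
                    | inl x => (0, x)
                    | inr y => (S (fst (wrep_index V k y)), snd (wrep_index V k y))
                    end
  end.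

Lemma wrep_index_le V k y : fst (wrep_index V k y) <= k.
Proof.
  induction k as [|k IH]; simpl; auto. destruct y as [x|y]; simpl; [lia|]. specialize (IH y). lia.
Qed.

Lemma wrep_index_let V k y : wlet (wrep V k) y = wlet V (snd (wrep_index V k y)).
Proof. induction k as [|k IH]; simpl; auto. destruct y; simpl; auto. Qed.

Lemma wrep_index_lt V k y y' : wlt (wrep V k) y y' ->
  fst (wrep_index V k y) < fst (wrep_index V k y') \/
  (fst (wrep_index V k y) = fst (wrep_index V k y') /\
   wlt V (snd (wrep_index V k y)) (snd (wrep_index V k y'))).
Proof.
  induction k as [|k IH]; simpl; auto.
  destruct y as [x|y], y' as [x'|y']; simpl; intro H; try tauto; [left; lia|].
  destruct (IH y y' H) as [Hlt|[Heq Hlt]]; [left; lia | right; auto].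
Qed.

Lemma wrep_index_surj V k j x : j <= k -> exists y, wrep_index V k y = (j, x).
Proof.
  revert j. induction k as [|k IH]; intros j Hj; simpl.
  - exists x. f_equal. lia.
  - destruct j as [|j]; [exists (inl x); reflexivity|].
    destruct (IH j) as [y Hy]; [lia|]. exists (inr y). rewrite Hy. reflexivity.
Qed.

(** * The words [U_n = W_n U_(n+1)^(K_n + 1)] *)

Section Tower.
Variable W : nat -> word.
Variable K : nat -> nat.
Hypothesis W_tail : forall n i, n < fst (wlet (W n) i).

Definition level_point := {m : nat & wdom (W m)}.

Definition level_lt (a b : level_point) : Prop :=
  exists e : projT1 a = projT1 b,
    wlt (W (projT1 b)) (eq_rect _ (fun m => wdom (W m)) (projT2 a) _ e) (projT2 b).

Definition level_let (a : level_point) : letter := wlet (W (projT1 a)) (projT2 a).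

Lemma level_lt_irrefl a : ~ level_lt a a.
Proof.
  destruct a as [m p]. intros [e H]. simpl in *. rewrite (UIP_refl_nat _ e) in H.
  exact (wlt_irrefl _ _ H).
Qed.

Lemma level_lt_trans a b c : level_lt a b -> level_lt b c -> level_lt a c.
Proof.
  destruct a as [m1 p1], b as [m2 p2], c as [m3 p3]. intros [e1 H1] [e2 H2]. simpl in *.
  destruct e1, e2. exists eq_refl. eapply wlt_trans; eauto.
Qed.

Lemma level_lt_total a b : projT1 a = projT1 b -> level_lt a b \/ a = b \/ level_lt b a.
Proof.
  destruct a as [m1 p1], b as [m2 p2]. simpl. intro e. destruct e.
  destruct (wlt_total _ p1 p2) as [H|[H|H]]; [left | subst; auto | right; right];
    exists eq_refl; exact H.
Qed.

Fixpoint path_lt (a b : list nat) : Prop :=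
  match a, b with
  | [], [] => False
  | [], _ :: _ => True
  | _ :: _, [] => False
  | x :: a', y :: b' => x < y \/ (x = y /\ path_lt a' b')
  end.

Lemma path_lt_irrefl a : ~ path_lt a a.
Proof. induction a; simpl; auto. intros [H|[_ H]]; [lia|auto]. Qed.

Lemma path_lt_trans a b c : path_lt a b -> path_lt b c -> path_lt a c.
Proof.
  revert b c. induction a as [|x a IH]; intros [|y b] [|z c]; simpl; try tauto.
  intros [H1|[H1 H2]] [H3|[H3 H4]]; subst; try (left; lia). right; eauto.
Qed.

Lemma path_lt_total a b : path_lt a b \/ a = b \/ path_lt b a.
Proof.
  revert b. induction a as [|x a IH]; intros [|y b]; simpl; auto.
  destruct (lt_eq_lt_dec x y) as [[H|H]|H]; auto. subst.
  destruct (IH b) as [H|[H|H]]; subst; auto.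
Qed.

Fixpoint path_ok (n : nat) (js : list nat) : Prop :=
  match js with [] => True | j :: t => j <= K n /\ path_ok (S n) t end.

(** A point of [U_n] is a point of [W_(n + length js)] reached along the path [js]: the
    [i]-th entry of [js] says in which of the [K_(n+i) + 1] copies of [U_(n+i+1)] it lies. *)
Definition tower_point (n : nat) (x : list nat * level_point) : Prop :=
  path_ok n (fst x) /\ projT1 (snd x) = length (fst x) + n.

Definition tower_dom (n : nat) := {x : list nat * level_point | tower_point n x}.

Definition point_lt (x y : list nat * level_point) : Prop :=
  path_lt (fst x) (fst y) \/ (fst x = fst y /\ level_lt (snd x) (snd y)).

Definition tower_lt n (x y : tower_dom n) : Prop := point_lt (proj1_sig x) (proj1_sig y).
Definition tower_let n (x : tower_dom n) : letter := level_let (snd (proj1_sig x)).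

Lemma tower_lt_irrefl n : forall i, ~ tower_lt n i i.
Proof.
  intros [[js q] v]. unfold tower_lt, point_lt; simpl.
  intros [H|[_ H]]; [eapply path_lt_irrefl | eapply level_lt_irrefl]; eauto.
Qed.

Lemma tower_lt_trans n : forall i j k, tower_lt n i j -> tower_lt n j k -> tower_lt n i k.
Proof.
  intros [[js1 q1] v1] [[js2 q2] v2] [[js3 q3] v3]. unfold tower_lt, point_lt; simpl.
  intros [H1|[H1 H2]] [H3|[H3 H4]]; subst; auto.
  - left. eapply path_lt_trans; eauto.
  - right. split; auto. eapply level_lt_trans; eauto.
Qed.

Lemma tower_lt_total n : forall i j, tower_lt n i j \/ i = j \/ tower_lt n j i.
Proof.
  intros [[js1 q1] v1] [[js2 q2] v2]. unfold tower_lt, point_lt; simpl.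
  destruct (path_lt_total js1 js2) as [H|[E|H]]; auto. subst js2.
  assert (Hq : projT1 q1 = projT1 q2) by (destruct v1, v2; simpl in *; congruence).
  destruct (level_lt_total q1 q2 Hq) as [H|[E|H]]; auto. subst q2.
  right; left. f_equal. apply proof_irrelevance.
Qed.

Fixpoint paths_of_length (n len : nat) : list (list nat) :=
  match len with
  | 0 => [[]]
  | S l => flat_map (fun j => map (cons j) (paths_of_length (S n) l)) (seq 0 (S (K n)))
  end.

Lemma in_paths_of_length js n : path_ok n js -> In js (paths_of_length n (length js)).
Proof.
  revert n. induction js as [|j t IH]; intros n Hv; [left; reflexivity|].
  destruct Hv as [Hj Ht]. cbn [length paths_of_length]. apply in_flat_map. exists j.
  split; [apply in_seq; lia | apply in_map, IH, Ht].
Qed.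

Lemma list_sig {A} (P : A -> Prop) (l : list A) :
  exists l' : list (sig P), forall x : sig P, In (proj1_sig x) l -> In x l'.
Proof.
  induction l as [|a t [l' H]]; [exists []; simpl; tauto|].
  destruct (classic (P a)) as [Ha|Ha].
  - exists (exist P a Ha :: l'). intros [x Hx] [E|E]; simpl in *.
    + subst. left. f_equal. apply proof_irrelevance.
    + right. apply (H (exist P x Hx)). auto.
  - exists l'. intros [x Hx] [E|E]; simpl in *; [subst; contradiction|].
    apply (H (exist P x Hx)). auto.
Qed.

Lemma level_points_fin M M' : exists L : list level_point,
  forall m p, m < M' -> fst (wlet (W m) p) <= M -> In (existT _ m p) L.
Proof.
  induction M' as [|M' [L HL]]; [exists []; intros; lia|].
  destruct (wfin (W M') M) as [l Hl].
  exists (L ++ map (fun p => existT (fun m => wdom (W m)) M' p) l). intros m p Hm Hp.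
  apply in_or_app. destruct (Nat.eq_dec m M') as [->|Hne].
  - right. apply in_map, Hl, Hp.
  - left. apply HL; [lia | exact Hp].
Qed.

(** Only the levels [m < M] carry letters of index [<= M], by [W_tail]. *)
Lemma tower_fin n M : exists l : list (tower_dom n), forall i, fst (tower_let n i) <= M -> In i l.
Proof.
  destruct (level_points_fin M M) as [L HL].
  destruct (list_sig (tower_point n)
    (flat_map (fun len => flat_map (fun js => map (pair js) L) (paths_of_length n len))
      (seq 0 M))) as [l' Hl'].
  exists l'. intros [[js [m p]] [v e]] Hi. apply Hl'. simpl in *.
  unfold tower_let, level_let in Hi; simpl in Hi. pose proof (W_tail m p).
  apply in_flat_map. exists (length js). split; [apply in_seq; lia|].
  apply in_flat_map. exists js. split; [apply in_paths_of_length, v|].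
  apply in_map, HL; lia.
Qed.

Definition tower (n : nat) : word :=
  Word (tower_dom n) (tower_lt n) (tower_lt_irrefl n) (tower_lt_trans n) (tower_lt_total n)
    (tower_let n) (tower_fin n).

Lemma tower_point_cons n (y : wdom (wrep (tower (S n)) (K n))) :
  tower_point n (fst (wrep_index _ _ y) :: fst (proj1_sig (snd (wrep_index _ _ y))),
                 snd (proj1_sig (snd (wrep_index _ _ y)))).
Proof.
  pose proof (wrep_index_le _ _ y) as Hj.
  destruct (wrep_index (tower (S n)) (K n) y) as [j [[js q] [v e]]].
  unfold tower_point in *; simpl in *. split; [auto | rewrite e; lia].
Qed.

Definition tower_unfold_map n (z : wdom (wcat (W n) (wrep (tower (S n)) (K n)))) : tower_dom n :=
  match z with
  | inl p => exist (tower_point n) ([], existT (fun m => wdom (W m)) n p) (conj I eq_refl)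
  | inr y => exist (tower_point n) _ (tower_point_cons n y)
  end.

Lemma tower_unfold n : wequiv (wcat (W n) (wrep (tower (S n)) (K n))) (tower n).
Proof.
  apply (wequiv_of_monotone_surj _ (tower n) (tower_unfold_map n)).
  - intros [p|y] [p'|y']; simpl; unfold tower_lt, point_lt; simpl; try tauto.
    + intro H. right. split; auto. exists eq_refl. exact H.
    + intro H. apply wrep_index_lt in H as [H|[H1 H2]]; [left; left; exact H|].
      simpl in H2. unfold tower_lt, point_lt in H2.
      destruct H2 as [H2|[H2 H3]]; [left; right; auto | right; split; [f_equal|]; auto].
  - intros [p|y]; simpl; auto. unfold tower_let; simpl. rewrite wrep_index_let. reflexivity.
  - intros [[js [m p]] [v e]]. destruct js as [|j t].
    + simpl in e. subst m. exists (inl p). simpl. f_equal. apply proof_irrelevance.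
    + destruct v as [Hj Hv]. simpl in e.
      assert (v' : tower_point (S n) (t, existT (fun m => wdom (W m)) m p)) by (split; simpl; auto; lia).
      destruct (wrep_index_surj (tower (S n)) (K n) j (exist _ _ v') Hj) as [y Hy].
      exists (inr y). apply eq_sig_hprop; [intros; apply proof_irrelevance|].
      simpl. rewrite Hy. reflexivity.
Qed.

Lemma hom_tower (G : group) (phi : word -> G) n : hom_from_HE G phi ->
  phi (tower n) = gmul (phi (W n)) (gpow (phi (tower (S n))) (S (K n))).
Proof.
  intro Hphi. pose proof Hphi as [Heq Hmul].
  rewrite <- (Heq _ _ (tower_unfold n)), Hmul, (hom_wrep G phi _ _ Hphi). reflexivity.
Qed.

End Tower.

Lemma nontrivial_tail_witness (G : group) (phi : word -> G) (gs : list G) n :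
  ~ (forall x, in_image_HE_tail G phi n x -> gen G (fun y => In y gs) x -> x = gone) ->
  exists p : word * list (G * bool),
    (forall i, n < fst (wlet (fst p) i)) /\ phi (fst p) <> gone /\
    Forall (fun q => In (fst q) gs) (snd p) /\ geval G (snd p) = phi (fst p).
Proof.
  intro H. apply not_all_ex_not in H as [x H].
  apply imply_to_and in H as [[V [HV <-]] H]. apply imply_to_and in H as [Hgen Hne].
  destruct (gen_geval _ _ Hgen) as [l [Hl El]]. exists (V, l). auto.
Qed.

Theorem lemma2p3 (G : group) (HG : aleph1_free G) (phi : word -> G)
  (Hphi : hom_from_HE G phi) (gs : list G) :
  exists n : nat, forall x : G,
    in_image_HE_tail G phi n x -> gen G (fun y => In y gs) x -> x = gone.
Proof.
  apply NNPP. intro Hno.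
  destruct (choice _ (fun n => nontrivial_tail_witness G phi gs n
    (fun H => Hno (ex_intro _ n H)))) as [c Hc].
  set (W n := fst (c n)). set (L n := length (snd (c n))). set (K n := n * L n + 1).
  assert (W_tail : forall n i, n < fst (wlet (W n) i)) by (intro n; apply (Hc n)).
  set (g n := phi (tower W K W_tail n)).
  destruct (HG _ (gen_subgroup _) (countable_gen_list_range G gs g)) as [X [HX X_free]].
  assert (Xgs : forall y, In y gs -> gen G X y) by (intros y Hy; apply HX, gen_base; auto).
  set (C := list_max (map (ell X) gs)).
  apply (no_power_descent X X_free (fun n => phi (W n)) g K C).
  - intro n. destruct (Hc n) as (_ & _ & Hl & E). unfold W. rewrite <- E.
    apply gen_gen, geval_gen. eapply Forall_impl; [|exact Hl]. auto.
  - intro n. apply HX, gen_base. eauto.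
  - intro n. apply (Hc n).
  - intro n. apply hom_tower, Hphi.
  - intros n Hn. destruct (Hc n) as (_ & _ & Hl & E). unfold W. rewrite <- E.
    assert (HC : forall y, In y gs -> ell X y <= C).
    { intros y Hy. apply (proj1 (Forall_forall _ _) (proj1 (list_max_le _ C) (le_n C))).
      apply in_map, Hy. }
    enough (ell X (geval G (snd (c n))) <= C * L n) by (unfold K; nia).
    apply (ell_geval_le X X_free). eapply Forall_impl; [|exact Hl]. auto.
Qed.
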